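(* Let $G$ be a finite group. If there exists $g\in G$ whose order is divisible by at least three distinct primes, then $\mathcal{I}(G)=\emptyset$ and the diameter of $\Gamma(G)$ is at most $2$.
   Context: For a finite group $G$, let $\widetilde{\Gamma}(G)$ be the graph with vertex set $G$ in which two distinct elements $x,y$ are adjacent if and only if $|\langle x,y\rangle|$ is divisible by at least three distinct primes. $\mathcal{I}(G)$ denotes the set of isolated vertices of $\widetilde{\Gamma}(G)$, and $\Gamma(G)$ is the subgraph of $\widetilde{\Gamma}(G)$ induced on $G\setminus\mathcal{I}(G)$. *)

From mathcomp Require Import all_boot all_fingroup.
Set Implicit Arguments. Unset Strict Implicit. Unset Printing Implicit Defensive.
Local Open Scope group_scope.

(* Edge relation of the graph \widetilde{Gamma}(G): distinct x, y are adjacent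
   iff |<x,y>| is divisible by at least three distinct primes. *)
Definition tadj (gT : finGroupType) (x y : gT) : bool :=
  (x != y) && (2 < size (primes #|<<[set x; y]>>|))%N.

Definition isolated_vertices (gT : finGroupType) (G : {set gT}) : {set gT} :=
  [set x in G | [forall y in G, ~~ tadj x y]].

(* Vertex set of Gamma(G) = G \ I(G) (induced subgraph of \widetilde{Gamma}). *)
Definition Gamma_vertices (gT : finGroupType) (G : {set gT}) : {set gT} :=
  G :\: isolated_vertices G.

Definition Gamma_diam_le2 (gT : finGroupType) (G : {set gT}) : Prop :=
  forall x y, x \in Gamma_vertices G -> y \in Gamma_vertices G -> x != y ->
    tadj x y || [exists z in Gamma_vertices G, tadj x z && tadj z y].

From mathcomp Require Import all_boot all_fingroup.
Set Implicit Arguments. Unset Strict Implicit. Unset Printing Implicit Defensive.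
Local Open Scope group_scope.

(* An element g whose order has three prime divisors is adjacent to every
   other element x, since #[g] divides #|<<[set x; g]>>|.  Hence nothing is
   isolated (1 is a neighbour of g), and any two vertices other than g have
   g as a common neighbour. *)

Lemma size_primes_dvd m n :
  (0 < n)%N -> (m %| n)%N -> (size (primes m) <= size (primes n))%N.
Proof.
move=> n_gt0 dv_mn; apply: uniq_leq_size; first exact: primes_uniq.
by move=> p; rewrite !mem_primes => /and3P[p_pr _ p_dv]; rewrite p_pr n_gt0 (dvdn_trans p_dv).
Qed.

Lemma tadjC (gT : finGroupType) (x y : gT) : tadj x y = tadj y x.
Proof. by rewrite /tadj eq_sym setUC. Qed.

Section RichElement.

Variables (gT : finGroupType) (g : gT).
Hypothesis g_rich : (2 < size (primes #[g]))%N.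

Lemma rich_neq1 : g != 1.
Proof. by apply: contraTneq g_rich => ->; rewrite order1. Qed.

Lemma tadj_rich x : x != g -> tadj x g.
Proof.
move=> xg; rewrite /tadj xg; apply: leq_trans g_rich _.
by apply: size_primes_dvd; rewrite ?cardG_gt0 // cardSg // cycle_subG mem_gen // !inE eqxx orbT.
Qed.

Lemma isolated_vertices_rich (G : {group gT}) :
  g \in G -> isolated_vertices G = set0.
Proof.
move=> gG; apply/setP=> x; rewrite !inE; apply/negbTE/nandP.
have [_ | ] := boolP (x \in G); [right | by left].
apply/forallPn; have [-> | xg] := eqVneq x g.
  by exists 1; rewrite group1 tadjC tadj_rich // eq_sym rich_neq1.
by exists g; rewrite gG tadj_rich.
Qed.

Lemma Gamma_diam_le2_rich (G : {group gT}) : g \in G -> Gamma_diam_le2 G.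
Proof.
move=> gG x y _ _.
case: (eqVneq x g) => [-> yg | xg _]; first by rewrite tadjC tadj_rich // eq_sym.
have [-> | yg] := eqVneq y g; first by rewrite tadj_rich.
apply/orP; right; apply/existsP; exists g.
by rewrite /Gamma_vertices isolated_vertices_rich // setD0 gG tadj_rich // tadjC tadj_rich.
Qed.

End RichElement.

Theorem lemma2p5 (gT : finGroupType) (G : {group gT}) :
  (exists2 g, g \in G & (2 < size (primes #[g]))%N) ->
  isolated_vertices G = set0 /\ Gamma_diam_le2 G.
Proof.
case=> g gG g_rich.
split; [exact: (isolated_vertices_rich g_rich gG) | exact: (Gamma_diam_le2_rich g_rich gG)].
Qed.
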